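(* Let $A\in\mathcal C$ and let $X$ be a finite independent subset of $A$. Then there is a finite independent subset $Y$ of $A$ with $X\subseteq Y$ such that $A\setminus{\rm desc}(Y)$ is finite.
   Context: Fix an integer $q\ge2$; $T=T_q$ is the digraph whose vertices are finite sequences over $\{0,\ldots,q-1\}$ with edges $(\bar w,\bar wi)$. For a digraph, an $s$-arc ($s\ge0$) from $u_0$ to $u_s$ is a sequence $u_0\ldots u_s$ with each $(u_i,u_{i+1})$ an edge and $u_{i-1}\ne u_{i+1}$ for $0<i<s$; ${\rm desc}(u)$ is the set of vertices reachable from $u$ by some $s$-arc, $s\ge0$ (including $u$), and ${\rm desc}(Y)=\bigcup_{y\in Y}{\rm desc}(y)$. A descendant-closed set $B$ (i.e. ${\rm desc}(b)\subseteq B$ for $b\in B$) is finitely generated if $B={\rm desc}(Z)$ for a finite $Z$. A subset is independent if the descendant sets of any two distinct members are disjoint. $\mathcal C$ is the class of digraphs $A$ such that ${\rm desc}(a)\cong T$ (as induced subdigraph) for every $a\in A$, $A={\rm desc}(Z)$ for some finite $Z$, and ${\rm desc}(a)\cap{\rm desc}(b)$ is finitely generated for all $a,b\in A$. *)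

From Stdlib Require List.
From mathcomp Require Import all_boot.
Set Implicit Arguments. Unset Strict Implicit. Unset Printing Implicit Defensive.

(* nbwalk E prev u l : the sequence u :: l is a walk along edges of E that
   never immediately backtracks (u_{i-1} <> u_{i+1}); prev is the vertex
   preceding u in the sequence (None if u is the start). *)
Fixpoint nbwalk (V : Type) (E : V -> V -> Prop) (prev : option V) (u : V)
  (l : seq V) : Prop :=
  match l with
  | [::] => True
  | w :: l' =>
      E u w /\ (match prev with Some p => p <> w | None => True end)
      /\ nbwalk E (Some u) w l'
  end.

(* an s-arc from u to v: u :: l with size l = s *)
Definition is_arc (V : Type) (E : V -> V -> Prop) (u v : V) (l : seq V) : Prop :=
  nbwalk E None u l /\ last u l = v.

Definition desc (V : Type) (E : V -> V -> Prop) (u : V) : V -> Prop :=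
  fun v => exists l, is_arc E u v l.

Definition descL (V : Type) (E : V -> V -> Prop) (Z : seq V) : V -> Prop :=
  fun v => exists2 z, List.In z Z & desc E z v.

(* the tree T_q: finite sequences over {0,...,q-1}, edges (w, w i) *)
Definition Tedge (q : nat) (w w' : seq 'I_q) : Prop :=
  exists i : 'I_q, w' = rcons w i.

Definition desc_iso_T (q : nat) (V : Type) (E : V -> V -> Prop) (a : V) : Prop :=
  exists f : {v : V | desc E a v} -> seq 'I_q,
    bijective f /\
    forall x y : {v : V | desc E a v}, E (proj1_sig x) (proj1_sig y) <-> Tedge (f x) (f y).

Definition fin_gen (V : Type) (E : V -> V -> Prop) (B : V -> Prop) : Prop :=
  exists Z : seq V, forall v, B v <-> descL E Z v.

Definition in_classC (q : nat) (V : Type) (E : V -> V -> Prop) : Prop :=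
  (forall a : V, desc_iso_T q E a) /\
  fin_gen E (fun _ => True) /\
  (forall a b : V, fin_gen E (fun v => desc E a v /\ desc E b v)).

Definition independent (V : Type) (E : V -> V -> Prop) (X : seq V) : Prop :=
  forall x y, List.In x X -> List.In y X -> x <> y ->
    forall v, ~ (desc E x v /\ desc E y v).

Definition finite_set (V : Type) (S : V -> Prop) : Prop :=
  exists l : seq V, forall v, S v -> List.In v l.

From mathcomp Require Import all_boot.
From Stdlib Require List.
From Stdlib Require Import Classical ClassicalEpsilon ProofIrrelevance.
From mathcomp Require Import zify.

Set Implicit Arguments. Unset Strict Implicit. Unset Printing Implicit Defensive.

(* Let Z be a finite generating set of A; treat its members one at a time. For
   z in Z, desc(z) is a copy of T_q in which descent is the prefix order on
   coordinates. The set desc(Y) ∩ desc(z) is generated by finitely many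
   vertices, all of depth < N for some N. Adding to Y the vertices of depth N
   not below any of them keeps Y independent, and afterwards only the finitely
   many vertices of desc(z) of depth < N can lie outside desc(Y). *)

Lemma In_mem (T : eqType) (x : T) (s : seq T) : List.In x s <-> x \in s.
Proof.
elim: s => [|y s IH] //=; rewrite in_cons.
by split=> [[-> | /IH ->] | /orP[/eqP -> | /IH]]; rewrite ?eqxx ?orbT; auto.
Qed.

Lemma exists_filter_In (A : Type) (P : A -> Prop) (l : seq A) :
  exists l', forall x, List.In x l' <-> List.In x l /\ P x.
Proof.
elim: l => [|a l [l' hl']]; first by exists [::] => x; split=> // [[]].
have [ha | ha] := classic (P a).
- exists (a :: l') => x /=; rewrite hl'.
  by split=> [[<- | []] | [[<- | hx] hp]]; auto.
- exists l' => x /=; rewrite hl'.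
  by split=> [[] | [[<- | hx] hp]]; auto.
Qed.

Lemma exists_ub_In (A : Type) (F : A -> nat) (l : seq A) :
  exists N, forall x, List.In x l -> F x < N.
Proof.
elim: l => [|a l [N hN]]; first by exists 0.
exists (maxn N (F a).+1) => x /= [<- | /hN]; lia.
Qed.

Lemma prefix_leq_common (T : eqType) (a b c : seq T) :
  prefix a c -> prefix b c -> size a <= size b -> prefix a b.
Proof.
rewrite !prefixE => /eqP ha /eqP hb hab.
by rewrite -{1}hb take_takel // ha.
Qed.

Lemma prefix_common_size (T : eqType) (a b c : seq T) :
  prefix a c -> prefix b c -> size a = size b -> a = b.
Proof. by rewrite !prefixE => /eqP ha /eqP hb hab; rewrite -ha -hb hab. Qed.

Definition words (q n : nat) : seq (seq 'I_q) := [seq tval t | t : n.-tuple 'I_q].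

Lemma mem_words q n (s : seq 'I_q) : (s \in words q n) = (size s == n).
Proof.
apply/imageP/eqP => [[t _ ->] | hs]; first exact: size_tuple.
by exists (Tuple (introT eqP hs)).
Qed.

Section Arcs.
Variables (V : Type) (E : V -> V -> Prop).

Lemma nbwalk_rcons2 prev u l x w :
  nbwalk E prev u (rcons (rcons l x) w) <->
  nbwalk E prev u (rcons l x) /\ E x w /\ last u l <> w.
Proof. by elim: l prev u => [|a l IH] prev u /=; [|rewrite IH]; tauto. Qed.

Lemma nbwalk_rcons prev u l x : nbwalk E prev u (rcons l x) -> nbwalk E prev u l.
Proof.
elim: l prev u => [|a l IH] prev u //= [huv [hprev hl]].
by split; [|split; [|exact: IH hl]].
Qed.

Lemma desc_refl u : desc E u u.
Proof. by exists [::]. Qed.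

(* If appending w would backtrack, the arc already reaches w one step earlier. *)
Lemma desc_edge a u w : desc E a u -> E u w -> desc E a w.
Proof.
move=> [l [hl hlast]] huw.
case/lastP: l hl hlast => [|l x] hl /=; first by move=> hau; subst u; exists [:: w].
rewrite last_rcons => hx; subst x.
have [hw | hw] := classic (last a l = w).
  by exists l; split; [exact: nbwalk_rcons hl | ].
exists (rcons (rcons l u) w); split; last by rewrite last_rcons.
exact/nbwalk_rcons2.
Qed.

Lemma nbwalk_desc a l : forall prev u,
  desc E a u -> nbwalk E prev u l -> desc E a (last u l).
Proof.
elim: l => [|w l IH] prev u //= hu [huw [_ hl]].
exact: IH _ _ (desc_edge hu huw) hl.
Qed.

Lemma desc_trans a u v : desc E a u -> desc E u v -> desc E a v.
Proof. by move=> hu [l [hl <-]]; exact: nbwalk_desc hl. Qed.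

Lemma descL_sub (Y1 Y2 : seq V) v :
  (forall x, List.In x Y1 -> List.In x Y2) -> descL E Y1 v -> descL E Y2 v.
Proof. by move=> hsub [y /hsub hy hyv]; exists y. Qed.

Lemma independent_cat (Y U : seq V) :
  independent E Y -> independent E U ->
  (forall x y v, List.In x Y -> List.In y U -> desc E x v -> desc E y v -> False) ->
  independent E (Y ++ U).
Proof.
move=> hY hU cross x y /List.in_app_iff hx /List.in_app_iff hy hxy v [hxv hyv].
case: hx => hx; case: hy => hy.
- exact: hY hx hy hxy v (conj hxv hyv).
- exact: cross hx hy hxv hyv.
- exact: cross hy hx hyv hxv.
- exact: hU hx hy hxy v (conj hxv hyv).
Qed.

End Arcs.

Definition tree_coordinates (q : nat) (V : Type) (E : V -> V -> Prop) (z : V)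
    (coord : V -> seq 'I_q) (vertex : seq 'I_q -> V) : Prop :=
  [/\ forall s, desc E z (vertex s),
      forall s, coord (vertex s) = s,
      forall v, desc E z v -> vertex (coord v) = v
    & forall u v, desc E z u -> desc E z v ->
        desc E u v <-> prefix (coord u) (coord v)].

Section IsoCoordinates.
Variables (q : nat) (V : Type) (E : V -> V -> Prop) (z : V)
  (f : {v : V | desc E z v} -> seq 'I_q) (g : seq 'I_q -> {v : V | desc E z v}).
Hypotheses (fK : cancel f g) (gK : cancel g f)
  (f_edge : forall x y, E (proj1_sig x) (proj1_sig y) <-> Tedge (f x) (f y)).

(* The value outside desc(z) is irrelevant. *)
Definition iso_coord (v : V) : seq 'I_q :=
  if excluded_middle_informative (desc E z v) is left hv then f (exist _ v hv)
  else [::].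

Definition iso_vertex (s : seq 'I_q) : V := proj1_sig (g s).

Lemma iso_coordE v (hv : desc E z v) : iso_coord v = f (exist _ v hv).
Proof.
rewrite /iso_coord; case: (excluded_middle_informative _) => [hv' | /(_ hv) []].
by rewrite (proof_irrelevance _ hv hv').
Qed.

Lemma iso_vertex_desc s : desc E z (iso_vertex s).
Proof. exact: proj2_sig (g s). Qed.

Lemma iso_vertexK s : iso_coord (iso_vertex s) = s.
Proof. by rewrite /iso_vertex -{2}(gK s); case: (g s) => v hv; exact: iso_coordE. Qed.

Lemma iso_coordK v : desc E z v -> iso_vertex (iso_coord v) = v.
Proof. by move=> hv; rewrite (iso_coordE hv) /iso_vertex fK. Qed.

Lemma iso_coord_edge u v : desc E z u -> desc E z v ->
  E u v <-> Tedge (iso_coord u) (iso_coord v).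
Proof.
move=> hu hv; rewrite (iso_coordE hu) (iso_coordE hv).
exact: (f_edge (exist _ u hu) (exist _ v hv)).
Qed.

Lemma nbwalk_prefix_iso_coord l : forall prev u, desc E z u ->
  nbwalk E prev u l -> prefix (iso_coord u) (iso_coord (last u l)).
Proof.
elim: l => [|w l IH] prev u hu /=; first by rewrite prefix_refl.
move=> [huw [_ hl]]; have hw := desc_edge hu huw.
have [i hi] := (iso_coord_edge hu hw).1 huw.
by apply: prefix_trans (IH _ _ hw hl); rewrite hi prefix_rcons.
Qed.

Lemma desc_extend_iso_coord u s :
  desc E z u -> desc E u (iso_vertex (iso_coord u ++ s)).
Proof.
move=> hu; elim/last_ind: s => [|s i IH].
  by rewrite cats0 (iso_coordK hu); exact: desc_refl.
apply: (desc_edge IH); apply/iso_coord_edge; try exact: iso_vertex_desc.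
by exists i; rewrite !iso_vertexK rcons_cat.
Qed.

Lemma iso_tree_coordinates : tree_coordinates E z iso_coord iso_vertex.
Proof.
split; [exact: iso_vertex_desc | exact: iso_vertexK | exact: iso_coordK |].
move=> u v hu hv; split=> [[l [hl <-]] | /prefixP [s hs]].
  exact: nbwalk_prefix_iso_coord hl.
by rewrite -(iso_coordK hv) hs; exact: desc_extend_iso_coord.
Qed.

End IsoCoordinates.

Lemma desc_iso_T_coordinates q (V : Type) (E : V -> V -> Prop) z :
  desc_iso_T q E z ->
  exists (coord : V -> seq 'I_q) vertex, tree_coordinates E z coord vertex.
Proof.
move=> [f [[g fK gK] f_edge]].
by exists (iso_coord f), (iso_vertex g); exact: iso_tree_coordinates.
Qed.

Section Level.
Variables (q : nat) (V : Type) (E : V -> V -> Prop) (z : V)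
  (coord : V -> seq 'I_q) (vertex : seq 'I_q -> V).
Hypotheses (vertex_desc : forall s, desc E z (vertex s))
  (coordK : forall s, coord (vertex s) = s)
  (vertexK : forall v, desc E z v -> vertex (coord v) = v)
  (desc_prefix : forall u v, desc E z u -> desc E z v ->
     desc E u v <-> prefix (coord u) (coord v)).

Lemma finite_shallow N :
  exists L, forall v, desc E z v -> size (coord v) < N -> List.In v L.
Proof.
exists (map vertex (flatten [seq words q n | n <- iota 0 N])) => v hv hvN.
rewrite -(vertexK hv); apply/List.in_map/In_mem/flatten_mapP.
by exists (size (coord v)); rewrite ?mem_iota ?mem_words.
Qed.

Variables (Y W U : seq V) (N : nat).
Hypotheses (Y_indep : independent E Y)
  (W_gen : forall v, descL E Y v /\ desc E z v <-> descL E W v)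
  (W_shallow : forall w, List.In w W -> size (coord w) < N)
  (U_level : forall x, List.In x U <->
     (desc E z x /\ size (coord x) = N) /\ ~ descL E W x).

Lemma W_desc w : List.In w W -> desc E z w.
Proof.
move=> hw; have hWw : descL E W w by exists w => //; exact: desc_refl.
by case: ((W_gen w).2 hWw).
Qed.

(* desc(Y) ∩ desc(z) is generated by W, of depth < N, so it meets desc(y), for y
   of depth N, only if y is itself below W. *)
Lemma level_desc_disjoint y v : List.In y U -> desc E y v -> ~ descL E Y v.
Proof.
move=> /U_level [[hy hyN] hyW] hyv hYv.
have hv := desc_trans hy hyv.
have [w hw hwv] := (W_gen v).1 (conj hYv hv).
have hwz := W_desc hw.
apply: hyW; exists w => //; apply/(desc_prefix hwz hy).
apply: (@prefix_leq_common _ _ _ (coord v)).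
- exact/(desc_prefix hwz hv).
- exact/(desc_prefix hy hv).
- by rewrite hyN ltnW ?W_shallow.
Qed.

Lemma independent_level : independent E U.
Proof.
move=> x y /U_level [[hx hxN] _] /U_level [[hy hyN] _] hxy v [hxv hyv].
have hv := desc_trans hx hxv.
apply: hxy; rewrite -(vertexK hx) -(vertexK hy); congr vertex.
apply: (@prefix_common_size _ _ _ (coord v)); last by rewrite hxN hyN.
- exact/(desc_prefix hx hv).
- exact/(desc_prefix hy hv).
Qed.

Lemma independent_cat_level : independent E (Y ++ U).
Proof.
apply: independent_cat => [||x y v hx hy hxv hyv]; [done | exact: independent_level|].
by apply: (level_desc_disjoint hy hyv); exists x.
Qed.

(* A vertex at depth >= N lies below its ancestor at level N, which is either in
   desc(W) ⊆ desc(Y) or in U. *)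
Lemma outside_cat_level_shallow v :
  desc E z v -> ~ descL E (Y ++ U) v -> size (coord v) < N.
Proof.
move=> hv hout; rewrite ltnNge; apply/negP => hNv.
pose u := vertex (take N (coord v)).
have hu : desc E z u := vertex_desc _.
have huv : desc E u v by apply/(desc_prefix hu hv); rewrite coordK prefix_take.
have [[w hw hwu] | huW] := classic (descL E W u).
- have hWv : descL E W v by exists w => //; exact: desc_trans hwu huv.
  have [[y hy hyv] _] := (W_gen v).2 hWv.
  by apply: hout; exists y => //; apply/List.in_app_iff; left.
- apply: hout; exists u => //; apply/List.in_app_iff; right; apply/U_level.
  by rewrite coordK size_takel.
Qed.

End Level.

Section Extension.
Variables (q : nat) (V : Type) (E : V -> V -> Prop).
Hypotheses (desc_tree : forall a : V, desc_iso_T q E a)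
  (cap_fin_gen : forall a b : V, fin_gen E (fun v => desc E a v /\ desc E b v)).

Lemma descL_cap_fin_gen z (Y : seq V) :
  exists W, forall v, descL E Y v /\ desc E z v <-> descL E W v.
Proof.
elim: Y => [|y Y [W hW]].
  by exists [::] => v; split=> [[[x []]] | [x []]].
have [Zy hZy] := cap_fin_gen y z.
exists (Zy ++ W) => v; split.
- move=> [[x /= [<- | hx] hxv] hzv].
    have [w hw hwv] := (hZy v).1 (conj hxv hzv).
    by exists w => //; apply/List.in_app_iff; left.
  have [w hw hwv] := (hW v).1 (conj (ex_intro2 _ _ x hx hxv) hzv).
  by exists w => //; apply/List.in_app_iff; right.
- move=> [w /List.in_app_iff [hw | hw] hwv].
    have [hyv hzv] := (hZy v).2 (ex_intro2 _ _ w hw hwv).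
    by split=> //; exists y => //; left.
  have [[x hx hxv] hzv] := (hW v).2 (ex_intro2 _ _ w hw hwv).
  by split=> //; exists x => //; right.
Qed.

Lemma extension_step z (Y : seq V) : independent E Y ->
  exists U, independent E (Y ++ U) /\
    exists L, forall v, desc E z v -> ~ descL E (Y ++ U) v -> List.In v L.
Proof.
move=> hY.
have [coord [vertex [vertex_desc coordK vertexK desc_prefix]]] :=
  desc_iso_T_coordinates (desc_tree z).
have [W hW] := descL_cap_fin_gen z Y.
have [N hN] := exists_ub_In (fun w => size (coord w)) W.
have [U hU] := exists_filter_In (fun x => ~ descL E W x) (map vertex (words q N)).
have U_level x : List.In x U <->
    (desc E z x /\ size (coord x) = N) /\ ~ descL E W x.
  rewrite hU List.in_map_iff; split=> [[[s [<- /In_mem hs]] hW']| [[hx hxN] hW']].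
    by move: hs; rewrite mem_words coordK => /eqP hsN; split.
  by split=> //; exists (coord x); rewrite vertexK // In_mem mem_words hxN.
exists U; split; first exact: (independent_cat_level vertexK desc_prefix hY hW hN U_level).
have [L hL] := finite_shallow vertexK N.
exists L => v hv hout; apply: (hL _ hv).
exact: (outside_cat_level_shallow vertex_desc coordK desc_prefix hW U_level hv hout).
Qed.

Lemma extension_cover (Z : seq V) : forall X, independent E X ->
  exists Y, (forall x, List.In x X -> List.In x Y) /\ independent E Y /\
    exists L, forall v, descL E Z v -> ~ descL E Y v -> List.In v L.
Proof.
elim: Z => [|z Z IH] X hX.
  by exists X; split=> //; split=> //; exists [::] => v [? []].
have [U [hXU [L1 hL1]]] := extension_step z hX.
have [Y [hsub [hY [L2 hL2]]]] := IH _ hXU.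
exists Y; split=> [x hx | ]; first by apply: hsub; apply/List.in_app_iff; left.
split=> //; exists (L1 ++ L2) => v [z' /= [<- | hz'] hz'v] hout; apply/List.in_app_iff.
  by left; apply: hL1 => // hXUv; apply: hout; exact: descL_sub hsub hXUv.
by right; apply: hL2 => //; exists z'.
Qed.

End Extension.

Theorem lemma3p1 (q : nat) (hq : 2 <= q) (V : Type) (E : V -> V -> Prop)
  (hA : in_classC q E) (X : seq V) (hX : independent E X) :
  exists Y : seq V,
    (forall x, List.In x X -> List.In x Y) /\ independent E Y /\
    finite_set (fun v => ~ descL E Y v).
Proof.
have [desc_tree [[Z hZ] cap_fin_gen]] := hA.
have [Y [hXY [hY [L hL]]]] := extension_cover desc_tree cap_fin_gen Z hX.
exists Y; split=> //; split=> //; exists L => v hv.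
by apply: (hL v _ hv); apply/hZ.
Qed.
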